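(* Fix an integer $r\ge 4$. For every integer $n\ge 33$, there exists a $K_{1,r}$-free graph $G$ of order $n$ with no isolated vertices and $\chi(G)=2$ such that \[ f_o(G)<\frac{|V(G)|}{\chi(G)}=\frac{n}{2}. \] Specifically, writing $n=9k+4\ell$ with integers $k\ge 1$, $\ell\ge 0$, one may take $G=kF\cup \ell C_4$, where $F$ is the bipartite graph with vertex set $\{a,b,c,d,u,v,w,x,y\}$ and edge set $\{au,ax,ay,bv,bw,bx,cu,cv,cy,du,dw,dx\}$, and $f_o(G)=4k+2\ell$.
   Context: All graphs are finite and simple. An induced subgraph of a graph $G$ is called odd if every vertex of it has odd degree in it. $f_o(G)$ denotes the maximum order of an odd induced subgraph of $G$. A graph is $K_{1,r}$-free if it contains no induced subgraph isomorphic to $K_{1,r}$. $\chi(G)$ is the chromatic number. $kF\cup\ell C_4$ denotes the vertex-disjoint union of $k$ copies of $F$ and $\ell$ copies of the $4$-cycle $C_4$. *)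

From mathcomp Require Import all_boot.
Set Implicit Arguments. Unset Strict Implicit. Unset Printing Implicit Defensive.

Section Graphs.
Variable T : finType.

Definition simple_graph (e : rel T) : Prop := symmetric e /\ irreflexive e.

Definition odd_induced (e : rel T) (S : {set T}) : bool :=
  [forall v in S, odd #|[set u in S | e v u]|].

Definition f_o (e : rel T) : nat :=
  \max_(S : {set T} | odd_induced e S) #|S|.

Definition has_induced_star (e : rel T) (r : nat) : bool :=
  [exists v, exists S : {set T},
     [&& S \subset [set u | e v u], #|S| == r &
         [forall x in S, forall y in S, ~~ e x y]]].

Definition K1r_free (e : rel T) (r : nat) : Prop := ~~ has_induced_star e r.

Definition no_isolated (e : rel T) : Prop := forall v, exists u, e v u.

Definition colorable (e : rel T) (k : nat) : Prop :=
  exists f : T -> 'I_k, forall x y, e x y -> f x != f y.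

Definition chromatic_number (e : rel T) (k : nat) : Prop :=
  colorable e k /\ forall j, j < k -> ~ colorable e j.

End Graphs.

(* In G = kF ∪ lC4 every vertex has degree at most 3, so G is K_{1,r}-free for
   r >= 4, and G is bipartite: F with sides {a,b,c,d} and {u,v,w,x,y}, C4 with
   alternate vertices.  An odd induced subgraph of a disjoint union restricts
   to an odd induced subgraph of every component, so
   f_o(kF ∪ lC4) <= k f_o(F) + l f_o(C4) <= 4k + 2l, where f_o(F) <= 4 and
   f_o(C4) <= 2 are checked by running through all vertex subsets.  Every
   n >= 33 is 9k + 4l with k >= 1, and then 2(4k + 2l) < n. *)
From mathcomp Require Import all_boot zify.
Set Implicit Arguments. Unset Strict Implicit. Unset Printing Implicit Defensive.

Section Graphs.
Variable T : finType.
Implicit Types (e : rel T) (S : {set T}).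

Definition deg e (v : T) : nat := #|[set u | e v u]|.

Lemma eq_odd_induced e e' S : e =2 e' -> odd_induced e S = odd_induced e' S.
Proof.
move=> ee'; apply: eq_forallb_in => v _.
by congr odd; apply: eq_card => u; rewrite !inE ee'.
Qed.

Lemma eq_f_o e e' : e =2 e' -> f_o e = f_o e'.
Proof. by move=> ee'; apply: eq_bigl => S; apply: eq_odd_induced. Qed.

Lemma K1r_free_deg e r : (forall v, deg e v < r) -> K1r_free e r.
Proof.
move=> deg_lt; apply/existsP => -[v /existsP [S /and3P [sub_nbhd /eqP cardS _]]].
by have := subset_leq_card sub_nbhd; rewrite cardS leqNgt deg_lt.
Qed.

Lemma colorable2 e (side : pred T) :
  (forall x y, e x y -> side x != side y) -> colorable e 2.
Proof.
move=> sideP; exists (fun x => if side x then ord0 else ord_max) => x y /sideP.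
by case: (side x); case: (side y).
Qed.

Lemma chromatic_number2 e (v : T) :
  no_isolated e -> colorable e 2 -> chromatic_number e 2.
Proof.
move=> noiso col2; split=> // -[|[|//]] _ [f fP]; have [u evu] := noiso v.
  by case: (f v).
by have := fP _ _ evu; rewrite !ord1 eqxx.
Qed.

End Graphs.

Section InducedSubgraph.
Variables (U T : finType) (e : rel T) (g : U -> T).
Hypothesis g_inj : injective g.

Lemma card_nbhd_imset (S : {set U}) x :
  #|[set u in g @: S | e (g x) u]| = #|[set u in S | relpre g e x u]|.
Proof.
rewrite -[RHS](card_imset _ g_inj); apply: eq_card => u; rewrite !inE.
apply/andP/imsetP => [[/imsetP [y yS ->] exy] | [y]].
  by exists y; rewrite ?inE ?yS.
by rewrite inE => /andP [yS exy] ->; rewrite imset_f.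
Qed.

Lemma odd_induced_imset (S : {set U}) :
  odd_induced (relpre g e) S -> odd_induced e (g @: S).
Proof.
move=> /forall_inP oddS; apply/forall_inP => _ /imsetP [x xS ->].
by rewrite card_nbhd_imset oddS.
Qed.

Lemma f_o_relpre : f_o (relpre g e) <= f_o e.
Proof.
apply/bigmax_leqP => S oddS; rewrite -(card_imset _ g_inj).
exact: leq_bigmax_cond (odd_induced_imset oddS).
Qed.

Lemma deg_relpre x : deg (relpre g e) x <= deg e (g x).
Proof.
rewrite /deg -(card_imset _ g_inj); apply/subset_leq_card/subsetP => v /imsetP [u].
by rewrite !inE => exu ->.
Qed.

Hypothesis g_closed : forall x u, e (g x) u -> exists y, u = g y.

Lemma nbhd_imset_preimset (S : {set T}) x :
  [set u in S | e (g x) u] = g @: [set y in g @^-1: S | e (g x) (g y)].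
Proof.
apply/setP => u; rewrite inE; apply/andP/imsetP => [[uS exu] | [y]].
  by have [y uy] := g_closed exu; exists y; rewrite // !inE -uy uS.
by rewrite !inE => /andP [yS exy] ->.
Qed.

Lemma odd_induced_preimset (S : {set T}) :
  odd_induced e S -> odd_induced (relpre g e) (g @^-1: S).
Proof.
move=> /forall_inP oddS; apply/forall_inP => x; rewrite inE => gxS.
by have := oddS _ gxS; rewrite nbhd_imset_preimset card_imset.
Qed.

Lemma card_preimset_f_o (S : {set T}) :
  odd_induced e S -> #|g @^-1: S| <= f_o (relpre g e).
Proof. by move=> oddS; apply: leq_bigmax_cond; apply: odd_induced_preimset. Qed.

Lemma deg_relpre_closed x : deg (relpre g e) x = deg e (g x).
Proof.
rewrite /deg; have -> : [set u | e (g x) u] = [set u in [set: T] | e (g x) u].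
  by apply/setP => u; rewrite !inE.
by rewrite nbhd_imset_preimset card_imset //; apply: eq_card => y; rewrite !inE.
Qed.

End InducedSubgraph.

Section Relabel.
Variables (U T : finType) (e : rel T) (g : U -> T).

Lemma simple_graph_relpre : simple_graph e -> simple_graph (relpre g e).
Proof. by case=> e_sym e_irr; split=> [x y | x]; [apply: e_sym | apply: e_irr]. Qed.

Lemma colorable_relpre k : colorable e k -> colorable (relpre g e) k.
Proof. by case=> f fP; exists (f \o g) => x y /fP. Qed.

Lemma no_isolated_relpre (h : T -> U) :
  cancel h g -> no_isolated e -> no_isolated (relpre g e).
Proof. by move=> hK noiso x; have [u exu] := noiso (g x); exists (h u); rewrite /= hK. Qed.

End Relabel.

Section DisjointUnion.
Variables (T1 T2 : finType) (e1 : rel T1) (e2 : rel T2).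

Definition sum_rel : rel (T1 + T2) := fun x y =>
  match x, y with
  | inl a, inl b => e1 a b
  | inr a, inr b => e2 a b
  | _, _ => false
  end.

Lemma simple_graph_sum : simple_graph e1 -> simple_graph e2 -> simple_graph sum_rel.
Proof.
case=> sym1 irr1 [sym2 irr2]; split.
  by case=> x [] y //=; first [exact: sym1 | exact: sym2].
by case=> x; first [exact: irr1 | exact: irr2].
Qed.

Lemma no_isolated_sum : no_isolated e1 -> no_isolated e2 -> no_isolated sum_rel.
Proof.
move=> noiso1 noiso2 [x|x].
  by have [y exy] := noiso1 x; exists (inl y).
by have [y exy] := noiso2 x; exists (inr y).
Qed.

Lemma colorable_sum k : colorable e1 k -> colorable e2 k -> colorable sum_rel k.
Proof.
case=> f1 f1P [f2 f2P]; exists (fun x => match x with inl a => f1 a | inr a => f2 a end).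
by case=> x [] y //=; first [exact: f1P | exact: f2P].
Qed.

Lemma inl_closed x u : sum_rel (inl x) u -> exists y, u = inl y.
Proof. by case: u => // y; exists y. Qed.

Lemma inr_closed x u : sum_rel (inr x) u -> exists y, u = inr y.
Proof. by case: u => // y; exists y. Qed.

Lemma card_sum_preimset (S : {set T1 + T2}) :
  #|S| = #|inl @^-1: S| + #|inr @^-1: S|.
Proof.
rewrite -!sum1_card big_sumType /=.
by congr (_ + _); apply: eq_bigl => x; rewrite inE.
Qed.

Lemma f_o_sum : f_o sum_rel <= f_o e1 + f_o e2.
Proof.
apply/bigmax_leqP => S oddS; rewrite card_sum_preimset leq_add //.
  exact: (card_preimset_f_o inl_inj (@inl_closed) oddS).
exact: (card_preimset_f_o inr_inj (@inr_closed) oddS).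
Qed.

Lemma deg_sum_le d :
  (forall a, deg e1 a <= d) -> (forall a, deg e2 a <= d) -> forall v, deg sum_rel v <= d.
Proof.
move=> deg1 deg2 [a|a].
  by rewrite -(deg_relpre_closed inl_inj (@inl_closed)).
by rewrite -(deg_relpre_closed inr_inj (@inr_closed)).
Qed.

End DisjointUnion.

Section Copies.
Variables (I T : finType) (e : rel T).

Definition copies : rel (I * T) := fun x y => (x.1 == y.1) && e x.2 y.2.

Lemma simple_graph_copies : simple_graph e -> simple_graph copies.
Proof.
case=> e_sym e_irr; split=> [[i a] [j b] | [i a]]; rewrite /copies /=.
  by rewrite eq_sym e_sym.
by rewrite e_irr andbF.
Qed.

Lemma no_isolated_copies : no_isolated e -> no_isolated copies.
Proof.
by move=> noiso [i a]; have [b eab] := noiso a; exists (i, b); rewrite /copies /= eqxx.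
Qed.

Lemma colorable_copies k : colorable e k -> colorable copies k.
Proof. by case=> f fP; exists (f \o snd) => x y /andP [_ /fP]. Qed.

Lemma pair_inj (i : I) : injective (@pair I T i).
Proof. by move=> a b []. Qed.

Lemma copy_closed (i : I) a u : copies (i, a) u -> exists b, u = (i, b).
Proof. by case: u => j b /andP [/eqP /= <- _]; exists b. Qed.

Lemma relpre_copy (i : I) : relpre (pair i) copies =2 e.
Proof. by move=> a b; rewrite /= /copies /= eqxx. Qed.

Lemma card_pair_preimset (S : {set I * T}) :
  #|S| = \sum_(i : I) #|pair i @^-1: S|.
Proof.
under eq_bigr => i _ do rewrite -sum1_card.
by rewrite -sum1_card pair_big_dep /=; apply: eq_bigl => -[i a]; rewrite inE.
Qed.

Lemma f_o_copies : f_o copies <= #|I| * f_o e.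
Proof.
apply/bigmax_leqP => S oddS; rewrite card_pair_preimset -sum_nat_const.
apply: leq_sum => i _; rewrite -(eq_f_o (relpre_copy i)).
exact: (card_preimset_f_o (@pair_inj i) (@copy_closed i) oddS).
Qed.

Lemma deg_copies (i : I) a : deg copies (i, a) = deg e a.
Proof.
rewrite -(deg_relpre_closed (@pair_inj i) (@copy_closed i)).
by apply: eq_card => b; rewrite !inE relpre_copy.
Qed.

End Copies.

Section OrdinalGraphs.
Variables (m : nat) (adj : rel nat).
Local Notation e := (relpre (@nat_of_ord m) adj).

Lemma card_ord_pred (P : pred nat) : #|[set x : 'I_m | P x]| = count P (iota 0 m).
Proof.
rewrite -sum1_card -val_enum_ord count_map -sum1_count big_enum_cond /=.
by apply: eq_bigl => x; rewrite inE.
Qed.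

Lemma forall_ord_iota (P : pred nat) : all P (iota 0 m) -> forall x : 'I_m, P x.
Proof. by move=> /allP allP x; apply: allP; rewrite mem_iota ltn_ord. Qed.

Lemma deg_ord_le d :
  all (fun a => count (adj a) (iota 0 m) <= d) (iota 0 m) -> forall x, deg e x <= d.
Proof. by move=> /forall_ord_iota degP x; rewrite /deg card_ord_pred degP. Qed.

Lemma no_isolated_ord : all (fun a => has (adj a) (iota 0 m)) (iota 0 m) -> no_isolated e.
Proof.
move=> /forall_ord_iota has_nbr x; have /hasP [b] := has_nbr x.
by rewrite mem_iota add0n => /andP [_ bm] xb; exists (Ordinal bm).
Qed.

Lemma colorable_ord (side : pred nat) :
  all (fun a => all (fun b => adj a b ==> (side a != side b)) (iota 0 m)) (iota 0 m) ->
  colorable e 2.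
Proof.
move=> /forall_ord_iota sideP; apply: (@colorable2 _ _ (fun x : 'I_m => side x)) => x y.
by move: (forall_ord_iota (sideP x) y) => /implyP.
Qed.

(* Stated over nat because enumerations of 'I_m and {set 'I_m} do not reduce:
   for a concrete m the hypothesis is discharged by case analysis on
   b 0, ..., b m.-1 followed by computation. *)
Lemma f_o_ord_le c :
  (forall b : pred nat,
     all (fun v => b v ==> odd (count (fun u => b u && adj v u) (iota 0 m))) (iota 0 m) ->
     count b (iota 0 m) <= c) ->
  f_o e <= c.
Proof.
move=> local_bound; apply/bigmax_leqP => S /forall_inP oddS.
pose b n := n \in [seq val x | x in S].
have bE (x : 'I_m) : b x = (x \in S) by rewrite /b mem_map ?mem_enum //; apply: val_inj.
have -> : #|S| = count b (iota 0 m).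
  by rewrite -card_ord_pred; apply: eq_card => x; rewrite inE bE.
apply/local_bound/allP => v; rewrite mem_iota add0n => /andP [_ vm].
rewrite -[v]/(nat_of_ord (Ordinal vm)) bE; apply/implyP => vS.
rewrite -card_ord_pred.
have -> : [set u : 'I_m | b u && adj v u] = [set u in S | e (Ordinal vm) u].
  by apply/setP => u; rewrite !inE bE.
exact: oddS.
Qed.

End OrdinalGraphs.

Definition edges_rel (s : seq (nat * nat)) : rel nat :=
  fun a b => ((a, b) \in s) || ((b, a) \in s).

Lemma simple_graph_edges m s :
  all (fun p => p.1 != p.2) s -> simple_graph (relpre (@nat_of_ord m) (edges_rel s)).
Proof.
move=> /allP noloop; split=> [x y | x]; first by rewrite /= /edges_rel orbC.
by rewrite /= /edges_rel orbb; apply/negP => /noloop; rewrite eqxx.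
Qed.

(* Vertices a, b, c, d, u, v, w, x, y of F are numbered 0, ..., 8. *)
Definition F_edges : seq (nat * nat) :=
  [:: (0, 4); (0, 7); (0, 8); (1, 5); (1, 6); (1, 7);
      (2, 4); (2, 5); (2, 8); (3, 4); (3, 6); (3, 7)].

Definition C4_edges : seq (nat * nat) := [:: (0, 1); (1, 2); (2, 3); (3, 0)].

Definition F : rel 'I_9 := relpre (@nat_of_ord 9) (edges_rel F_edges).
Definition C4 : rel 'I_4 := relpre (@nat_of_ord 4) (edges_rel C4_edges).

Lemma simple_graph_F : simple_graph F. Proof. exact: simple_graph_edges. Qed.
Lemma simple_graph_C4 : simple_graph C4. Proof. exact: simple_graph_edges. Qed.

Lemma no_isolated_F : no_isolated F. Proof. exact: no_isolated_ord. Qed.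
Lemma no_isolated_C4 : no_isolated C4. Proof. exact: no_isolated_ord. Qed.

Lemma colorable_F : colorable F 2. Proof. exact: (colorable_ord (side := leq 4)). Qed.
Lemma colorable_C4 : colorable C4 2. Proof. exact: (colorable_ord (side := odd)). Qed.

Lemma deg_F x : deg F x <= 3. Proof. exact: deg_ord_le. Qed.
Lemma deg_C4 x : deg C4 x <= 2. Proof. exact: deg_ord_le. Qed.

Lemma f_o_F : f_o F <= 4.
Proof.
apply: f_o_ord_le => b /=.
by move: (b 0) (b 1) (b 2) (b 3) (b 4) (b 5) (b 6) (b 7) (b 8) => [] [] [] [] [] [] [] [] [].
Qed.

Lemma f_o_C4 : f_o C4 <= 2.
Proof. by apply: f_o_ord_le => b /=; move: (b 0) (b 1) (b 2) (b 3) => [] [] [] []. Qed.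

Section kF_lC4.
Variables k l : nat.

Definition G : rel ('I_k * 'I_9 + 'I_l * 'I_4) := sum_rel (copies F) (copies C4).

Lemma card_G : #|{: 'I_k * 'I_9 + 'I_l * 'I_4}| = 9 * k + 4 * l.
Proof. by rewrite card_sum !card_prod !card_ord mulnC [4 * l]mulnC. Qed.

Lemma simple_graph_G : simple_graph G.
Proof.
exact/simple_graph_sum/simple_graph_copies/simple_graph_C4/simple_graph_copies/simple_graph_F.
Qed.

Lemma no_isolated_G : no_isolated G.
Proof.
exact/no_isolated_sum/no_isolated_copies/no_isolated_C4/no_isolated_copies/no_isolated_F.
Qed.

Lemma colorable_G : colorable G 2.
Proof. exact/colorable_sum/colorable_copies/colorable_C4/colorable_copies/colorable_F. Qed.

Lemma deg_G v : deg G v <= 3.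
Proof.
apply: deg_sum_le => -[i a]; rewrite deg_copies; first exact: deg_F.
exact: leq_trans (deg_C4 a) _.
Qed.

Lemma f_o_G : f_o G <= 4 * k + 2 * l.
Proof.
apply: leq_trans (f_o_sum _ _) _; rewrite mulnC [2 * l]mulnC.
apply: leq_add; apply: leq_trans (f_o_copies _ _) _; rewrite card_ord leq_mul2l.
  by rewrite f_o_F orbT.
by rewrite f_o_C4 orbT.
Qed.

End kF_lC4.

Arguments G : clear implicits.

Lemma nine_four_decomposition n : 33 <= n -> exists k l, 0 < k /\ n = 9 * k + 4 * l.
Proof.
move=> n_ge33; have := divn_eq n 4; have := ltn_pmod n (isT : 0 < 4).
move: (n %/ 4) (n %% 4) => q [|[|[|[|//]]]] _ nE.
- by exists 4, (q - 9); lia.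
- by exists 1, (q - 2); lia.
- by exists 2, (q - 4); lia.
- by exists 3, (q - 6); lia.
Qed.

Lemma ord_bijective (T : finType) n : #|T| = n -> exists g : 'I_n -> T, bijective g.
Proof.
by move=> <-; exists enum_val; exists enum_rank; [exact: enum_valK | exact: enum_rankK].
Qed.

Theorem theorem2p6 (r : nat) (hr : 4 <= r) (n : nat) (hn : 33 <= n) :
  exists e : rel 'I_n,
    [/\ simple_graph e, K1r_free e r, no_isolated e,
        chromatic_number e 2 & 2 * f_o e < n].
Proof.
have [k [l [k_gt0 nE]]] := nine_four_decomposition hn.
have [g [h gK hK]] := ord_bijective (etrans (card_G k l) (esym nE)).
have g_inj : injective g := can_inj gK.
have no_isolated_e := no_isolated_relpre hK (@no_isolated_G k l).
exists (relpre g (G k l)); split.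
- exact/simple_graph_relpre/simple_graph_G.
- apply: K1r_free_deg => v; apply: leq_ltn_trans (deg_relpre _ g_inj v) _.
  exact: leq_ltn_trans (deg_G _) hr.
- exact: no_isolated_e.
- have n_gt0 : 0 < n by lia.
  apply: (chromatic_number2 (Ordinal n_gt0) no_isolated_e).
  exact/colorable_relpre/colorable_G.
- apply: (@leq_ltn_trans (2 * (4 * k + 2 * l))); last by lia.
  by rewrite leq_mul2l (leq_trans (f_o_relpre _ g_inj) (f_o_G k l)) orbT.
Qed.
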